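(* Let $\mathcal M$ be a non-empty compact, locally connected Hausdorff space and $\vec\varphi=(\varphi_1,\dots,\varphi_k):\mathcal M\to\mathbb R^k$ a continuous function. Let $(\vec l,\vec b)$ be an admissible pair, i.e. $\vec l=(l_1,\dots,l_k)$ is a Euclidean unit vector with all $l_i>0$ and $\vec b=(b_1,\dots,b_k)$ satisfies $\sum_i b_i=0$. Define $F^{\vec\varphi}_{(\vec l,\vec b)}:\mathcal M\to\mathbb R$ by $F^{\vec\varphi}_{(\vec l,\vec b)}(P)=\max_{i=1,\dots,k}\frac{\varphi_i(P)-b_i}{l_i}$. Then for all $s,t\in\mathbb R$ with $s<t$, setting $\vec x=s\vec l+\vec b$ and $\vec y=t\vec l+\vec b$, we have $$\ell_{(\mathcal M,\vec\varphi)}(\vec x,\vec y)=\ell_{(\mathcal M,F^{\vec\varphi}_{(\vec l,\vec b)})}(s,t).$$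
   Context: For $\vec x,\vec y\in\mathbb R^k$ write $\vec x\preceq\vec y$ if $x_i\le y_i$ for all $i$, and $\vec x\prec\vec y$ if $x_i<y_i$ for all $i$. For a continuous $\vec\varphi:\mathcal M\to\mathbb R^k$ and $\vec t\in\mathbb R^k$, let $\mathcal M\langle\vec\varphi\preceq\vec t\rangle=\{P\in\mathcal M:\varphi_i(P)\le t_i,\ i=1,\dots,k\}$. Two points $P,Q\in\mathcal M$ are $\langle\vec\varphi\preceq\vec y\rangle$-connected if some connected subset of $\mathcal M\langle\vec\varphi\preceq\vec y\rangle$ contains both. The ($k$-dimensional) size function $\ell_{(\mathcal M,\vec\varphi)}:\{(\vec x,\vec y)\in\mathbb R^k\times\mathbb R^k:\vec x\prec\vec y\}\to\mathbb N$ assigns to $(\vec x,\vec y)$ the number of equivalence classes into which $\mathcal M\langle\vec\varphi\preceq\vec x\rangle$ is divided by the $\langle\vec\varphi\preceq\vec y\rangle$-connectedness relation. For $k=1$ this gives the classical size function $\ell_{(\mathcal M,\phi)}(s,t)$, $s<t$, of a continuous $\phi:\mathcal M\to\mathbb R$. *)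

From HB Require Import structures.
From mathcomp Require Import all_boot all_order all_algebra.
From mathcomp Require Import all_classical all_reals topology normedtype.
Import numFieldNormedType.Exports.
Set Implicit Arguments. Unset Strict Implicit. Unset Printing Implicit Defensive.
Import Order.TTheory GRing.Theory Num.Theory.
Local Open Scope classical_set_scope.
Local Open Scope ring_scope.

Definition locally_connected (M : topologicalType) : Prop :=
  forall (x : M) (U : set M), nbhs x U ->
    exists V : set M, [/\ open V, connected V, V x & V `<=` U].

Definition vle (R : realType) (k : nat) (x y : 'I_k -> R) : Prop :=
  forall i, x i <= y i.
Definition vlt (R : realType) (k : nat) (x y : 'I_k -> R) : Prop :=
  forall i, x i < y i.

Definition sublevel (M : topologicalType) (R : realType) (k : nat)
  (phi : M -> 'I_k -> R) (t : 'I_k -> R) : set M :=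
  [set P | vle (phi P) t].

Definition lconnected (M : topologicalType) (R : realType) (k : nat)
  (phi : M -> 'I_k -> R) (y : 'I_k -> R) (P Q : M) : Prop :=
  exists C : set M, [/\ connected C, C `<=` sublevel phi y, C P & C Q].

Definition size_classes (M : topologicalType) (R : realType) (k : nat)
  (phi : M -> 'I_k -> R) (x y : 'I_k -> R) : set (set M) :=
  [set C | exists2 P, sublevel phi x P &
     C = [set Q | sublevel phi x Q /\ lconnected phi y P Q]].

(* k-dimensional size function value at (x,y) (for x < y), as a cardinal:
   (size_fun phi x y #= `I_n) means l(x,y) = n. *)
Definition size_fun := size_classes.

Definition size_fun1 (M : topologicalType) (R : realType)
  (f : M -> R) (s t : R) : set (set M) :=
  @size_fun M R 1 (fun P _ => f P) (fun _ => s) (fun _ => t).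

Definition admissible (R : realType) (k : nat) (l b : 'I_k -> R) : Prop :=
  [/\ \sum_(i < k) l i ^+ 2 = 1, forall i, 0 < l i & \sum_(i < k) b i = 0].

Definition Fmax (M : Type) (R : realType) (k : nat)
  (phi : M -> 'I_k -> R) (l b : 'I_k -> R) (P : M) : R :=
  sup (range (fun i : 'I_k => (phi P i - b i) / l i)).

From HB Require Import structures.
From mathcomp Require Import all_boot all_order all_algebra.
From mathcomp Require Import all_classical all_reals topology normedtype.
Import numFieldNormedType.Exports.
Import Order.TTheory GRing.Theory Num.Theory.
Local Open Scope classical_set_scope.
Local Open Scope ring_scope.

(* Since every l_i is positive, F(P) <= u holds iff phi(P) <= u l + b
   componentwise.  Hence the sublevel sets of F at s and t are those of phi
   at x and y, and a size function depends on nothing but these two sublevel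
   sets. *)

Lemma has_ubound_range_ord {R : realType} {k : nat} (f : 'I_k -> R) :
  has_ubound (range f).
Proof.
exists (\sum_(i < k) `|f i|) => _ [j _ <-].
rewrite (bigD1 j) //=; apply: le_trans (ler_norm (f j)) _.
by rewrite lerDl sumr_ge0.
Qed.

Lemma sup_range_ord_le {R : realType} {k : nat} (f : 'I_k -> R) (u : R) :
  (0 < k)%N -> sup (range f) <= u <-> forall i, f i <= u.
Proof.
move=> k_gt0; split=> [supf_le i | f_le].
  apply: le_trans supf_le; apply/ub_le_sup; last by exists i.
  exact: has_ubound_range_ord.
by apply: ge_sup => [|_ [j _ <-]]; [exists (f (Ordinal k_gt0)), (Ordinal k_gt0)|].
Qed.

Lemma admissible_dim_gt0 {R : realType} {k : nat} {l b : 'I_k -> R} :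
  admissible l b -> (0 < k)%N.
Proof.
case: k l b => [|//] l b [sum_l2 _ _].
by move: sum_l2; rewrite big_ord0 => /eqP; rewrite eq_sym oner_eq0.
Qed.

Lemma Fmax_le {M : Type} {R : realType} {k : nat} (phi : M -> 'I_k -> R)
    (l b : 'I_k -> R) (P : M) (u : R) :
  (0 < k)%N -> (forall i, 0 < l i) ->
  Fmax phi l b P <= u <-> vle (phi P) (fun i => u * l i + b i).
Proof.
move=> k_gt0 l_gt0; rewrite /Fmax sup_range_ord_le //.
by split=> le_u i; move: (le_u i); rewrite ler_pdivrMr // lerBlDr.
Qed.

Lemma sublevel_Fmax {M : topologicalType} {R : realType} {k : nat}
    (phi : M -> 'I_k -> R) (l b : 'I_k -> R) (u : R) :
  (0 < k)%N -> (forall i, 0 < l i) ->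
  sublevel phi (fun i => u * l i + b i) =
  sublevel (fun P (_ : 'I_1) => Fmax phi l b P) (fun _ => u).
Proof.
move=> k_gt0 l_gt0; apply/seteqP; split=> P /=; rewrite /sublevel /vle /=.
  by move=> le_P _; apply/Fmax_le.
by move=> /(_ ord0) /Fmax_le; apply.
Qed.

Lemma eq_size_classes {M : topologicalType} {R : realType} {k k' : nat}
    {phi : M -> 'I_k -> R} {psi : M -> 'I_k' -> R}
    {x y : 'I_k -> R} {x' y' : 'I_k' -> R} :
  sublevel phi x = sublevel psi x' -> sublevel phi y = sublevel psi y' ->
  size_classes phi x y = size_classes psi x' y'.
Proof. by move=> eq_x eq_y; rewrite /size_classes /lconnected eq_x eq_y. Qed.

Theorem theorem2p3 (R : realType) (M : topologicalType) (k : nat)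
  (phi : M -> 'I_k -> R) (l b : 'I_k -> R) :
  [set: M] !=set0 -> compact [set: M] -> locally_connected M ->
  hausdorff_space M ->
  (forall i, continuous (fun P => phi P i)) ->
  admissible l b ->
  forall s t : R, s < t ->
  (size_fun phi (fun i => s * l i + b i) (fun i => t * l i + b i)
    #= size_fun1 (Fmax phi l b) s t)%card.
Proof.
move=> _ _ _ _ _ adm s t _.
have k_gt0 := admissible_dim_gt0 adm.
have [_ l_gt0 _] := adm.
rewrite /size_fun1 /size_fun (eq_size_classes
  (sublevel_Fmax phi l b s k_gt0 l_gt0) (sublevel_Fmax phi l b t k_gt0 l_gt0)).
exact: card_eqxx.
Qed.
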